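(* For every positive integer $n$ and every $r \in [\frac{\sqrt{3}}{4}, \frac{1}{2})$, we have $N_n(r) = \lceil \frac{n}{3} \rceil$.
   Context: For a positive integer $n$, let $\mathcal{P}_n$ denote the family of all sets of $n$ points in the Euclidean plane such that the distance between any two points of the set is at most $1$. For $0 < r \le 1$, let $N_n(r)$ be the largest integer $k$ such that for every $P \in \mathcal{P}_n$ there exists a circle of radius $r$ (i.e. a closed disc of radius $r$) which covers (contains) at least $k$ points of $P$. *)

From Stdlib Require Import Reals Lra List Arith.
Import ListNotations.
Open Scope R_scope.

Definition point := (R * R)%type.

Definition dist (p q : point) : R :=
  sqrt ((fst p - fst q) ^ 2 + (snd p - snd q) ^ 2).

(* P is a set of n points (listed without repetition) of diameter at most 1,
   i.e. P belongs to the family \mathcal{P}_n. *)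
Definition in_family (n : nat) (P : list point) : Prop :=
  NoDup P /\ length P = n /\
  (forall p q, In p P -> In q P -> dist p q <= 1).

Definition covered (P : list point) (c : point) (r : R) : nat :=
  length (filter (fun p => if Rle_dec (dist p c) r then true else false) P).

Definition guaranteed (n : nat) (r : R) (k : nat) : Prop :=
  forall P, in_family n P -> exists c : point, (k <= covered P c r)%nat.

Definition is_N (n : nat) (r : R) (k : nat) : Prop :=
  guaranteed n r k /\ (forall k', guaranteed n r k' -> (k' <= k)%nat).

Definition ceil_div3 (n : nat) : nat := ((n + 2) / 3)%nat.

(* A set of diameter at most 1 lies in a regular hexagon of width 1 (Pal):
   the alternating sum of its support numbers in six directions 60 degrees apart changes
   sign when the directions are rotated by 60 degrees, hence vanishes for some direction,
   and then the three strips of width 1 containing the set can be centred at a common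
   point.  Three discs of radius sqrt 3 / 4 cover that hexagon, so one of them contains at
   least ceil (n / 3) of the n points.  Put clusters of ceil (n / 3), floor ((n + 1) / 3) and floor (n / 3)
   points on short segments running inwards from the vertices of a unit equilateral
   triangle.  The diameter stays at most 1, while points of different clusters are more
   than 2 r apart when the segments are short enough, so a disc of radius r < 1 / 2 meets
   only one cluster. *)

From Stdlib Require Import Reals RList Lra Lia List FinFun.
Import ListNotations.
Open Scope R_scope.

Definition dot (p q : point) : R := fst p * fst q + snd p * snd q.
Definition dist2 (p q : point) : R := (fst p - fst q) ^ 2 + (snd p - snd q) ^ 2.
Definition unit_vec (v : point) : Prop := dot v v = 1.
Definition opp (v : point) : point := (- fst v, - snd v).
Definition translate (c : point) (s : R) (v : point) : point :=
  (fst c + s * fst v, snd c + s * snd v).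

Lemma dist2_ge0 p q : 0 <= dist2 p q.
Proof. unfold dist2; pose proof (pow2_ge_0 (fst p - fst q)); pose proof (pow2_ge_0 (snd p - snd q)); lra. Qed.

Lemma dist_le_iff p q r : 0 <= r -> dist p q <= r <-> dist2 p q <= r * r.
Proof.
  intros Hr; unfold dist; fold (dist2 p q); rewrite <- (sqrt_square r) at 1 by exact Hr.
  split; [apply sqrt_le_0; [apply dist2_ge0 | nra] | apply sqrt_le_1_alt].
Qed.

Lemma dist_gt_of_dist2 p q r : 0 <= r -> r * r < dist2 p q -> r < dist p q.
Proof. intros Hr H; apply Rnot_le_lt; rewrite dist_le_iff by exact Hr; lra. Qed.

Lemma dist_as_dist_euc p q : dist p q = dist_euc (fst p) (snd p) (fst q) (snd q).
Proof. unfold dist_euc, dist, Rsqr; f_equal; ring. Qed.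

Lemma dist_triangle p q c : dist p q <= dist p c + dist q c.
Proof. rewrite !dist_as_dist_euc, (distance_symm (fst q)); apply triangle. Qed.

Lemma dot_opp p v : dot p (opp v) = - dot p v.
Proof. unfold dot, opp; simpl; ring. Qed.

Lemma opp_opp v : opp (opp v) = v.
Proof. destruct v; unfold opp; simpl; rewrite !Ropp_involutive; reflexivity. Qed.

Lemma dist2_translate p c s v :
  dist2 p (translate c s v) = dist2 p c - 2 * s * (dot p v - dot c v) + s * s * dot v v.
Proof. unfold dist2, translate, dot; simpl; ring. Qed.

Lemma translate_inj V s s' d : d <> (0, 0) -> translate V s d = translate V s' d -> s = s'.
Proof.
  destruct d as [d1 d2]; unfold translate; simpl; intros Hd H; injection H as H1 H2.
  assert (Hpos : 0 < d1 * d1 + d2 * d2).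
  { pose proof (Rle_0_sqr d1); pose proof (Rle_0_sqr d2).
    destruct (Req_dec d1 0) as [->|H1'].
    - destruct (Req_dec d2 0) as [->|H2']; [easy|].
      pose proof (Rsqr_pos_lt d2 H2'); unfold Rsqr in *; lra.
    - pose proof (Rsqr_pos_lt d1 H1'); unfold Rsqr in *; lra. }
  assert (E1 : s * d1 - s' * d1 = 0) by lra; assert (E2 : s * d2 - s' * d2 = 0) by lra.
  assert (Hs : (s - s') * (d1 * d1 + d2 * d2) = 0).
  { transitivity ((s * d1 - s' * d1) * d1 + (s * d2 - s' * d2) * d2); [ring | rewrite E1, E2; ring]. }
  apply Rmult_integral in Hs as [|]; lra.
Qed.

Lemma dot_diff_sq_le p q v : (dot p v - dot q v) ^ 2 <= dist2 p q * dot v v.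
Proof.
  unfold dot, dist2.
  assert (0 <= ((fst p - fst q) * snd v - (snd p - snd q) * fst v) ^ 2) by apply pow2_ge_0.
  nra.
Qed.

Lemma dot_diff_le_dist p q v : unit_vec v -> dist p q <= 1 -> dot p v - dot q v <= 1.
Proof.
  intros Hv Hpq; apply dist_le_iff in Hpq; [|lra].
  pose proof (dot_diff_sq_le p q v) as H; rewrite Hv in H; nra.
Qed.

Lemma sqrt3_sq : sqrt 3 * sqrt 3 = 3.
Proof. apply sqrt_sqrt; lra. Qed.

Lemma sqrt3_bounds : 1 < sqrt 3 < 2.
Proof. pose proof sqrt3_sq; pose proof (sqrt_pos 3); split; nra. Qed.

Lemma sqrt3_sq_mul x : sqrt 3 * sqrt 3 * x = 3 * x.
Proof. rewrite sqrt3_sq; ring. Qed.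

Definition rot60 (v : point) : point :=
  (fst v / 2 - sqrt 3 / 2 * snd v, sqrt 3 / 2 * fst v + snd v / 2).

Lemma rot60_3 v : rot60 (rot60 (rot60 v)) = opp v.
Proof.
  destruct v as [x y]; unfold rot60, opp; simpl.
  pose proof (sqrt3_sq_mul x); pose proof (sqrt3_sq_mul y);
  pose proof (sqrt3_sq_mul (sqrt 3 * x)); pose proof (sqrt3_sq_mul (sqrt 3 * y)).
  f_equal; lra.
Qed.

Lemma rot60_opp v : rot60 (opp v) = opp (rot60 v).
Proof. destruct v; unfold rot60, opp; simpl; f_equal; field. Qed.

Lemma rot60_2 v :
  rot60 (rot60 v) = (- fst v / 2 - sqrt 3 / 2 * snd v, sqrt 3 / 2 * fst v - snd v / 2).
Proof.
  destruct v as [x y]; unfold rot60; simpl.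
  pose proof (sqrt3_sq_mul x); pose proof (sqrt3_sq_mul y); f_equal; lra.
Qed.

Lemma dot_rot60 p v : dot p (rot60 v) = dot p v + dot p (rot60 (rot60 v)).
Proof.
  destruct p as [a b], v as [x y]; unfold rot60, dot; simpl.
  pose proof (sqrt3_sq_mul (a * x)); pose proof (sqrt3_sq_mul (b * y)); lra.
Qed.

Lemma dot_rot60_rot60 v w : dot (rot60 v) (rot60 w) = dot v w.
Proof.
  destruct v as [a b], w as [x y]; unfold rot60, dot; simpl.
  pose proof (sqrt3_sq_mul (a * x)); pose proof (sqrt3_sq_mul (b * y)); lra.
Qed.

Lemma unit_rot60 v : unit_vec v -> unit_vec (rot60 v).
Proof. unfold unit_vec; rewrite dot_rot60_rot60; auto. Qed.

Lemma sum_sq_dot_rot60 p c v :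
  (dot p v - dot c v) ^ 2 + (dot p (rot60 v) - dot c (rot60 v)) ^ 2
  + (dot p (rot60 (rot60 v)) - dot c (rot60 (rot60 v))) ^ 2
  = 3 / 2 * dist2 p c * dot v v.
Proof.
  rewrite rot60_2.
  destruct p as [a b], c as [a' b'], v as [x y]; unfold rot60, dot, dist2; simpl.
  pose proof (sqrt3_sq_mul (((b - b') * x - (a - a') * y) ^ 2)); lra.
Qed.

(** * Three discs covering a regular hexagon of width 1 *)

Definition slab (c w p : point) : Prop := -1/2 <= dot p w - dot c w <= 1/2.

(* Three strips of width 1 at 60 degrees to each other: a regular hexagon of width 1
   centred at c. *)
Definition in_hexagon (c v p : point) : Prop :=
  slab c v p /\ slab c (rot60 v) p /\ slab c (rot60 (rot60 v)) p.

Lemma sum_zero_min_bound x y z :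
  x + y + z = 0 -> -1/2 <= x -> y <= 1/2 -> z <= 1/2 -> x <= y -> x <= z ->
  2/3 * (x ^ 2 + y ^ 2 + z ^ 2) + x / 2 <= 1/8.
Proof.
  intros Hs Hx Hy Hz Hxy Hxz.
  assert (Ez : z = - x - y) by lra; subst z.
  pose proof (Rmult_le_pos (1/2 - y) (- 2 * x - y) ltac:(lra) ltac:(lra)).
  pose proof (Rmult_le_pos (x + 1/2) (y - x) ltac:(lra) ltac:(lra)).
  nra.
Qed.

Lemma dist_le_sqrt3_4 p c : dist p c <= sqrt 3 / 4 <-> dist2 p c <= 3 / 16.
Proof.
  pose proof sqrt3_sq; pose proof sqrt3_bounds.
  rewrite dist_le_iff by lra.
  replace (sqrt 3 / 4 * (sqrt 3 / 4)) with (3 / 16) by nra; reflexivity.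
Qed.

(* The discs are centred halfway between c and the midpoints of three alternate sides, in
   the directions rot60 v, opp v and opp (rot60 (rot60 v)).  The projections of p - c on
   these directions sum to zero, and the disc in the direction of the largest one contains p. *)
Lemma hexagon_cover3 c v p : unit_vec v -> in_hexagon c v p ->
  dist p (translate c (1/4) (rot60 v)) <= sqrt 3 / 4 \/
  dist p (translate c (-1/4) v) <= sqrt 3 / 4 \/
  dist p (translate c (-1/4) (rot60 (rot60 v))) <= sqrt 3 / 4.
Proof.
  intros Hv [H0 [H1 H2]]; unfold slab in *.
  rewrite !dist_le_sqrt3_4, !dist2_translate, (unit_rot60 _ (unit_rot60 _ Hv)), (unit_rot60 _ Hv), Hv.
  pose proof (sum_sq_dot_rot60 p c v) as Hsq; rewrite Hv in Hsq.
  pose proof (dot_rot60 p v); pose proof (dot_rot60 c v).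
  set (a := dot p v - dot c v) in *.
  set (b := dot p (rot60 v) - dot c (rot60 v)) in *.
  set (e := dot p (rot60 (rot60 v)) - dot c (rot60 (rot60 v))) in *.
  assert (Hsum : - b + a + e = 0) by (unfold a, b, e; lra).
  destruct (Rle_dec (- b) a), (Rle_dec (- b) e), (Rle_dec a e).
  all: first
    [ left; pose proof (sum_zero_min_bound (- b) a e); lra
    | right; left; pose proof (sum_zero_min_bound a e (- b)); lra
    | right; right; pose proof (sum_zero_min_bound e (- b) a); lra ].
Qed.

(** * Sets of diameter at most 1 lie in a regular hexagon of width 1 *)

Lemma Rmax_abs_form a b : Rmax a b = (a + b + Rabs (a - b)) / 2.
Proof. unfold Rmax, Rabs; destruct Rle_dec, Rcase_abs; lra. Qed.

Lemma continuity_Rmax f g :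
  continuity f -> continuity g -> continuity (fun t => Rmax (f t) (g t)).
Proof.
  intros Hf Hg t.
  apply (continuity_pt_locally_ext (fun t => (f t + g t + Rabs (f t - g t)) * / 2) _ 1);
    [lra | intros; rewrite Rmax_abs_form; reflexivity |].
  apply continuity_pt_mult; [|apply continuity_pt_const; intros ? ?; reflexivity].
  apply continuity_pt_plus; [apply continuity_pt_plus; auto|].
  apply (continuity_pt_comp (fun t => f t - g t) Rabs); [apply continuity_pt_minus; auto|].
  apply Rcontinuity_abs.
Qed.

Lemma continuity_MaxRlist {A : Type} (f : A -> R -> R) (l : list A) :
  (forall a, continuity (f a)) -> continuity (fun t => MaxRlist (map (fun a => f a t) l)).
Proof.
  intros Hf; induction l as [|a [|b l] IH]; simpl.
  - apply continuity_const; intros ? ?; reflexivity.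
  - apply Hf.
  - apply (continuity_Rmax (f a) (fun t => MaxRlist (map (fun a => f a t) (b :: l)))); auto.
Qed.

Definition support (P : list point) (v : point) : R := MaxRlist (map (fun p => dot p v) P).

Lemma support_ge P v p : In p P -> dot p v <= support P v.
Proof. intros Hp; apply MaxRlist_P1, in_map_iff; eauto. Qed.

Lemma support_attained P v : P <> [] -> exists p, In p P /\ support P v = dot p v.
Proof.
  intros HP.
  assert (Hin : In (support P v) (map (fun p => dot p v) P)).
  { apply MaxRlist_P2; destruct P as [|p P]; [easy|]; exists (dot p v); left; reflexivity. }
  apply in_map_iff in Hin as [p [Hp HpP]]; eauto.
Qed.

Lemma support_width P v : unit_vec v ->
  (forall p q, In p P -> In q P -> dist p q <= 1) -> support P v + support P (opp v) <= 1.
Proof.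
  intros Hv Hdiam; destruct P as [|p0 P]; [unfold support; simpl; lra|].
  destruct (support_attained (p0 :: P) v) as [p [Hp ->]]; [easy|].
  destruct (support_attained (p0 :: P) (opp v)) as [q [Hq ->]]; [easy|].
  rewrite dot_opp; apply dot_diff_le_dist; auto.
Qed.

(* When this alternating sum of support numbers vanishes, the three strips of width 1
   containing P in the directions v, rot60 v, rot60 (rot60 v) can be given a common centre. *)
Definition hex_defect (P : list point) (v : point) : R :=
  let h k := support P (Nat.iter k rot60 v) in
  h 0%nat - h 1%nat + h 2%nat - h 3%nat + h 4%nat - h 5%nat.

Lemma hex_defect_rot60 P v : hex_defect P (rot60 v) = - hex_defect P v.
Proof. unfold hex_defect; simpl; rewrite ?rot60_3, ?rot60_opp, ?opp_opp; lra. Qed.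

Definition dir (t : R) : point := (cos t, sin t).

Lemma continuity_rot60 (w : R -> point) :
  continuity (fun t => fst (w t)) -> continuity (fun t => snd (w t)) ->
  continuity (fun t => fst (rot60 (w t))) /\ continuity (fun t => snd (rot60 (w t))).
Proof.
  intros H1 H2; unfold rot60; simpl; split.
  - apply continuity_minus; [apply continuity_mult|apply continuity_scal]; auto.
    apply continuity_const; intros ? ?; reflexivity.
  - apply continuity_plus; [apply continuity_scal|apply continuity_mult]; auto.
    apply continuity_const; intros ? ?; reflexivity.
Qed.

Lemma continuity_iter_rot60_dir k :
  continuity (fun t => fst (Nat.iter k rot60 (dir t))) /\
  continuity (fun t => snd (Nat.iter k rot60 (dir t))).
Proof.
  induction k as [|k [IH1 IH2]].
  - split; [apply continuity_cos | apply continuity_sin].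
  - exact (continuity_rot60 (fun t => Nat.iter k rot60 (dir t)) IH1 IH2).
Qed.

Lemma continuity_support_iter_rot60_dir P k :
  continuity (fun t => support P (Nat.iter k rot60 (dir t))).
Proof.
  destruct (continuity_iter_rot60_dir k) as [H1 H2].
  apply (continuity_MaxRlist (fun p t => dot p (Nat.iter k rot60 (dir t)))); intros p.
  unfold dot; apply continuity_plus; apply continuity_scal; auto.
Qed.

Lemma unit_dir t : unit_vec (dir t).
Proof. unfold unit_vec, dot, dir; simpl; pose proof (sin2_cos2 t); unfold Rsqr in *; lra. Qed.

Lemma dir_PI3 : dir (PI / 3) = rot60 (dir 0).
Proof. unfold dir, rot60; simpl; rewrite cos_PI3, sin_PI3, cos_0, sin_0; f_equal; field. Qed.

Lemma exists_hex_defect_zero P : exists v, unit_vec v /\ hex_defect P v = 0.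
Proof.
  set (f t := hex_defect P (dir t)).
  assert (Hf : continuity f).
  { unfold f, hex_defect.
    repeat first [ apply continuity_support_iter_rot60_dir | apply continuity_minus
                 | apply continuity_plus | apply continuity_opp ]. }
  assert (Hsign : f 0 * f (PI / 3) <= 0).
  { unfold f; rewrite dir_PI3, hex_defect_rot60; nra. }
  destruct (IVT_cor f 0 (PI / 3) Hf) as [t [_ Ht]]; [pose proof PI_RGT_0; lra | exact Hsign |].
  exists (dir t); split; [apply unit_dir | exact Ht].
Qed.

Lemma interval_sum_feasible a0 b0 a1 b1 a2 b2 :
  a0 <= b0 -> a1 <= b1 -> a2 <= b2 -> a0 + a2 <= b1 -> a1 <= b0 + b2 ->
  exists x z, a0 <= x <= b0 /\ a1 <= x + z <= b1 /\ a2 <= z <= b2.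
Proof.
  intros H0 H1 H2 H02 H1'.
  set (x := Rmax a0 (a1 - b2)); exists x, (Rmax a2 (a1 - x)).
  unfold x, Rmax; repeat destruct Rle_dec; lra.
Qed.

Lemma exists_point_with_dots v x z : unit_vec v ->
  exists c, dot c v = x /\ dot c (rot60 (rot60 v)) = z.
Proof.
  intros Hv; rewrite rot60_2; unfold unit_vec, dot in *.
  destruct v as [v1 v2]; simpl in *.
  pose proof sqrt3_bounds.
  remember ((2 * z + x) / sqrt 3) as b eqn:Hb.
  exists (x * v1 - b * v2, x * v2 + b * v1); simpl; split.
  - transitivity (x * (v1 * v1 + v2 * v2)); [ring | rewrite Hv; ring].
  - transitivity ((v1 * v1 + v2 * v2) * (- x / 2 + sqrt 3 / 2 * b)); [field|].
    rewrite Hv, Hb; field; lra.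
Qed.

Lemma diameter_le1_in_hexagon P :
  (forall p q, In p P -> In q P -> dist p q <= 1) ->
  exists c v, unit_vec v /\ forall p, In p P -> in_hexagon c v p.
Proof.
  intros Hdiam.
  destruct (exists_hex_defect_zero P) as [v [Hv Hdef]].
  pose proof (unit_rot60 _ Hv) as Hv1; pose proof (unit_rot60 _ Hv1) as Hv2.
  pose proof (support_width P v Hv Hdiam) as W0.
  pose proof (support_width P _ Hv1 Hdiam) as W1.
  pose proof (support_width P _ Hv2 Hdiam) as W2.
  unfold hex_defect in Hdef; simpl in Hdef; rewrite ?rot60_3, ?rot60_opp in Hdef.
  set (A0 := support P v) in *; set (A1 := support P (rot60 v)) in *;
  set (A2 := support P (rot60 (rot60 v))) in *; set (A3 := support P (opp v)) in *;
  set (A4 := support P (opp (rot60 v))) in *; set (A5 := support P (opp (rot60 (rot60 v)))) in *.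
  destruct (interval_sum_feasible (A0 - 1/2) (1/2 - A3) (A1 - 1/2) (1/2 - A4) (A2 - 1/2) (1/2 - A5))
    as [x [z [Hx [Hxz Hz]]]]; [lra .. |].
  destruct (exists_point_with_dots v x z Hv) as [c [Hcx Hcz]].
  exists c, v; split; [exact Hv|]; intros p Hp.
  pose proof (support_ge P v p Hp); pose proof (support_ge P (opp v) p Hp).
  pose proof (support_ge P (rot60 v) p Hp); pose proof (support_ge P (opp (rot60 v)) p Hp).
  pose proof (support_ge P (rot60 (rot60 v)) p Hp).
  pose proof (support_ge P (opp (rot60 (rot60 v))) p Hp).
  rewrite !dot_opp in *.
  pose proof (dot_rot60 c v).
  unfold in_hexagon, slab; subst A0 A1 A2 A3 A4 A5; lra.
Qed.

Lemma diameter_le1_cover3 P :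
  (forall p q, In p P -> In q P -> dist p q <= 1) ->
  exists c1 c2 c3, forall p, In p P ->
    dist p c1 <= sqrt 3 / 4 \/ dist p c2 <= sqrt 3 / 4 \/ dist p c3 <= sqrt 3 / 4.
Proof.
  intros Hdiam; destruct (diameter_le1_in_hexagon P Hdiam) as [c [v [Hv Hhex]]].
  exists (translate c (1/4) (rot60 v)), (translate c (-1/4) v),
    (translate c (-1/4) (rot60 (rot60 v))).
  intros p Hp; exact (hexagon_cover3 c v p Hv (Hhex p Hp)).
Qed.

Lemma covered_cons p L c r :
  covered (p :: L) c r = ((if Rle_dec (dist p c) r then 1 else 0) + covered L c r)%nat.
Proof. unfold covered; simpl; destruct Rle_dec; reflexivity. Qed.

Lemma covered_app L1 L2 c r : covered (L1 ++ L2) c r = (covered L1 c r + covered L2 c r)%nat.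
Proof. unfold covered; rewrite filter_app, length_app; reflexivity. Qed.

Lemma covered_le_length L c r : (covered L c r <= length L)%nat.
Proof. apply filter_length_le. Qed.

Lemma covered_pos L c r : (0 < covered L c r)%nat -> exists p, In p L /\ dist p c <= r.
Proof.
  induction L as [|p L IH]; intros H; [unfold covered in H; simpl in H; lia|].
  rewrite covered_cons in H; destruct (Rle_dec (dist p c) r) as [Hp|Hp].
  - exists p; split; [left; reflexivity | exact Hp].
  - destruct (IH ltac:(lia)) as [q [Hq Hd]]; exists q; split; [right|]; assumption.
Qed.

Definition far_apart (r : R) (L1 L2 : list point) : Prop :=
  forall p q, In p L1 -> In q L2 -> 2 * r < dist p q.

Lemma covered_far_apart r L1 L2 c :
  far_apart r L1 L2 -> covered L1 c r = 0%nat \/ covered L2 c r = 0%nat.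
Proof.
  intros Hfar.
  destruct (covered L1 c r) eqn:E1; [left; reflexivity|].
  destruct (covered L2 c r) eqn:E2; [right; reflexivity|].
  destruct (covered_pos L1 c r) as [p [Hp Hpc]]; [lia|].
  destruct (covered_pos L2 c r) as [q [Hq Hqc]]; [lia|].
  pose proof (Hfar p q Hp Hq); pose proof (dist_triangle p q c); lra.
Qed.

Lemma covered_far_apart3 r L1 L2 L3 c K :
  far_apart r L1 L2 -> far_apart r L1 L3 -> far_apart r L2 L3 ->
  (length L1 <= K)%nat -> (length L2 <= K)%nat -> (length L3 <= K)%nat ->
  (covered (L1 ++ L2 ++ L3) c r <= K)%nat.
Proof.
  intros H12 H13 H23 K1 K2 K3; rewrite !covered_app.
  pose proof (covered_le_length L1 c r); pose proof (covered_le_length L2 c r);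
  pose proof (covered_le_length L3 c r).
  destruct (covered_far_apart r L1 L2 c H12), (covered_far_apart r L1 L3 c H13),
    (covered_far_apart r L2 L3 c H23); lia.
Qed.

Lemma length_le_covered3 L c1 c2 c3 r :
  (forall p, In p L -> dist p c1 <= r \/ dist p c2 <= r \/ dist p c3 <= r) ->
  (length L <= covered L c1 r + covered L c2 r + covered L c3 r)%nat.
Proof.
  induction L as [|p L IH]; intros Hcov; simpl; [lia|].
  rewrite !covered_cons.
  specialize (IH (fun q Hq => Hcov q (or_intror Hq))).
  destruct (Hcov p (or_introl eq_refl)) as [H|[H|H]];
    repeat destruct Rle_dec; lra || lia.
Qed.

Lemma ceil_div3_le_summand n a b c :
  (n <= a + b + c)%nat -> (ceil_div3 n <= a \/ ceil_div3 n <= b \/ ceil_div3 n <= c)%nat.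
Proof.
  unfold ceil_div3; pose proof (Nat.div_mod (n + 2) 3); pose proof (Nat.mod_upper_bound (n + 2) 3).
  lia.
Qed.

Lemma ceil_div3_split n : (ceil_div3 n + (n + 1) / 3 + n / 3)%nat = n.
Proof.
  unfold ceil_div3.
  pose proof (Nat.div_mod (n + 2) 3); pose proof (Nat.mod_upper_bound (n + 2) 3).
  pose proof (Nat.div_mod (n + 1) 3); pose proof (Nat.mod_upper_bound (n + 1) 3).
  pose proof (Nat.div_mod n 3); pose proof (Nat.mod_upper_bound n 3).
  lia.
Qed.

Lemma guaranteed_ceil_div3 n r : sqrt 3 / 4 <= r -> guaranteed n r (ceil_div3 n).
Proof.
  intros Hr P [_ [Hlen Hdiam]].
  destruct (diameter_le1_cover3 P Hdiam) as [c1 [c2 [c3 Hcov]]].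
  assert (Hcov' : forall p, In p P -> dist p c1 <= r \/ dist p c2 <= r \/ dist p c3 <= r)
    by (intros p Hp; destruct (Hcov p Hp) as [H|[H|H]]; lra).
  pose proof (length_le_covered3 P c1 c2 c3 r Hcov') as Hsum; rewrite Hlen in Hsum.
  destruct (ceil_div3_le_summand _ _ _ _ Hsum) as [H|[H|H]]; eauto.
Qed.

(** * Three far-apart clusters near the vertices of a unit triangle *)

Section Clusters.

Variable eps : R.
Hypothesis eps_pos : 0 < eps.
Hypothesis eps_le : eps <= 1/8.

Definition near (V d p : point) : Prop := exists o, 0 <= o <= eps /\ p = translate V o d.

Definition cluster (V d : point) (k : nat) : list point :=
  map (fun i => translate V (eps / (INR i + 1)) d) (seq 0 k).

Lemma length_cluster V d k : length (cluster V d k) = k.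
Proof. unfold cluster; rewrite length_map, length_seq; reflexivity. Qed.

Lemma in_cluster_near V d k p : In p (cluster V d k) -> near V d p.
Proof.
  unfold cluster; intros Hp; apply in_map_iff in Hp as [i [<- _]].
  exists (eps / (INR i + 1)); split; [|reflexivity].
  pose proof (pos_INR i); split; [apply Rlt_le, Rdiv_lt_0_compat; lra|].
  apply Rmult_le_reg_r with (INR i + 1); [lra|]; field_simplify; nra.
Qed.

Lemma NoDup_cluster V d k : d <> (0, 0) -> NoDup (cluster V d k).
Proof.
  intros Hd; apply Injective_map_NoDup; [|apply seq_NoDup].
  intros i j Hij; apply translate_inj in Hij; [|exact Hd].
  pose proof (pos_INR i); pose proof (pos_INR j).
  assert (Ei : INR i + 1 = eps / (eps / (INR i + 1))) by (field; lra).
  assert (Ej : INR j + 1 = eps / (eps / (INR j + 1))) by (field; lra).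
  apply INR_eq; rewrite Hij, <- Ej in Ei; lra.
Qed.

Definition separated (V d V' d' : point) : Prop :=
  forall p q, near V d p -> near V' d' q -> 1 - 8 * eps < dist2 p q.

Lemma separated_clusters_disjoint V d V' d' a b p :
  separated V d V' d' -> In p (cluster V d a) -> ~ In p (cluster V' d' b).
Proof.
  intros Hsep Hp Hp'.
  pose proof (Hsep p p (in_cluster_near V d a p Hp) (in_cluster_near V' d' b p Hp')).
  unfold dist2 in *; rewrite !Rminus_diag in *; lra.
Qed.

Lemma separated_clusters_far_apart r V d V' d' a b :
  0 <= r -> 4 * (r * r) = 1 - 8 * eps -> separated V d V' d' ->
  far_apart r (cluster V d a) (cluster V' d' b).
Proof.
  intros Hr Heps Hsep p q Hp Hq; apply dist_gt_of_dist2; [lra|].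
  specialize (Hsep p q (in_cluster_near V d a p Hp) (in_cluster_near V' d' b q Hq)); lra.
Qed.

Definition vA : point := (0, 0).
Definition vB : point := (1, 0).
Definition vC : point := (1 / 2, sqrt 3 / 2).

Definition near_triangle (p : point) : Prop :=
  near vA (1, 0) p \/ near vB (-1, 0) p \/ near vC (0, -1) p.

Ltac triangle_arith := unfold vA, vB, vC, translate, dist2; simpl;
  pose proof sqrt3_sq; pose proof sqrt3_bounds.

Lemma near_triangle_dist2_le1 p q : near_triangle p -> near_triangle q -> dist2 p q <= 1.
Proof.
  intros [[o [Ho ->]]|[[o [Ho ->]]|[o [Ho ->]]]] [[o' [Ho' ->]]|[[o' [Ho' ->]]|[o' [Ho' ->]]]];
    triangle_arith; nra.
Qed.

Lemma separated_AB : separated vA (1, 0) vB (-1, 0).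
Proof. intros p q [o [Ho ->]] [o' [Ho' ->]]; triangle_arith; nra. Qed.

Lemma separated_AC : separated vA (1, 0) vC (0, -1).
Proof. intros p q [o [Ho ->]] [o' [Ho' ->]]; triangle_arith; nra. Qed.

Lemma separated_BC : separated vB (-1, 0) vC (0, -1).
Proof. intros p q [o [Ho ->]] [o' [Ho' ->]]; triangle_arith; nra. Qed.

Definition triangle_clusters (a b c : nat) : list point :=
  cluster vA (1, 0) a ++ cluster vB (-1, 0) b ++ cluster vC (0, -1) c.

Lemma in_family_triangle_clusters a b c :
  in_family (a + b + c) (triangle_clusters a b c).
Proof.
  unfold triangle_clusters; split; [|split].
  - apply NoDup_app; [apply NoDup_cluster; intros [=]; lra | apply NoDup_app |].
    + apply NoDup_cluster; intros [=]; lra.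
    + apply NoDup_cluster; intros [=]; lra.
    + intros p; apply separated_clusters_disjoint, separated_BC.
    + intros p Hp Hp'; apply in_app_or in Hp' as [Hp'|Hp'].
      * exact (separated_clusters_disjoint _ _ _ _ _ _ p separated_AB Hp Hp').
      * exact (separated_clusters_disjoint _ _ _ _ _ _ p separated_AC Hp Hp').
  - rewrite !length_app, !length_cluster; lia.
  - intros p q Hp Hq; apply dist_le_iff; [lra|]; rewrite Rmult_1_r.
    apply near_triangle_dist2_le1; unfold near_triangle;
      repeat match goal with H : In _ (_ ++ _) |- _ => apply in_app_or in H as [H|H] end;
      eauto using in_cluster_near.
Qed.

Lemma covered_triangle_clusters r a b c K center :
  0 <= r -> 4 * (r * r) = 1 - 8 * eps -> (a <= K)%nat -> (b <= K)%nat -> (c <= K)%nat ->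
  (covered (triangle_clusters a b c) center r <= K)%nat.
Proof.
  intros Hr Heps Ha Hb Hc; unfold triangle_clusters.
  apply covered_far_apart3; rewrite ?length_cluster; auto;
    apply separated_clusters_far_apart; auto;
    [apply separated_AB | apply separated_AC | apply separated_BC].
Qed.

End Clusters.

Lemma guaranteed_le_ceil_div3 n r k :
  0 <= r -> r < 1/2 -> guaranteed n r k -> (k <= ceil_div3 n)%nat.
Proof.
  intros Hr0 Hr1 Hk.
  set (eps := (1 - 4 * (r * r)) / 8).
  assert (Heps0 : 0 < eps) by (unfold eps; nra).
  assert (Heps1 : eps <= 1/8) by (unfold eps; nra).
  assert (Heps : 4 * (r * r) = 1 - 8 * eps) by (unfold eps; field).
  pose proof (in_family_triangle_clusters eps Heps0 Heps1 (ceil_div3 n) ((n + 1) / 3) (n / 3))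
    as Hfam.
  rewrite ceil_div3_split in Hfam.
  destruct (Hk _ Hfam) as [c Hc].
  enough (covered (triangle_clusters eps (ceil_div3 n) ((n + 1) / 3) (n / 3)) c r
          <= ceil_div3 n)%nat by lia.
  apply covered_triangle_clusters; auto; unfold ceil_div3;
    apply Nat.Div0.div_le_mono; lia.
Qed.

Theorem theorem2 (n : nat) (r : R) :
  (0 < n)%nat -> sqrt 3 / 4 <= r -> r < 1 / 2 ->
  is_N n r (ceil_div3 n).
Proof.
  intros _ Hr1 Hr2; split.
  - exact (guaranteed_ceil_div3 n r Hr1).
  - intros k Hk; apply guaranteed_le_ceil_div3 with r; auto.
    pose proof (sqrt_pos 3); lra.
Qed.
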